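(* Let $(U_n)_{n\in\mathbb{Z}}$ satisfy $U_n\in\mathcal{S}$ for all $n$ and $U_n=I_2$ for all $|n|\ge N_0$, where $N_0\ge1$ is an integer, and let $\mathcal{U}$ be the associated quantum walk evolution. Let $\Psi^{(1)},\Psi^{(2)}\in\mathcal{B}$ be defined by $\Psi^{(1)}(N_0)=(1,0)^T$, $\Psi^{(1)}(n)=0$ for $n\ne N_0$, and $\Psi^{(2)}(-N_0)=(0,1)^T$, $\Psi^{(2)}(n)=0$ for $n\neq -N_0$. Then there exist constants $C>0$ and $0<M<1$ such that for $k=1,2$, $$\|(\mathcal{U}^L\Psi^{(k)})(n)\|_{\mathbb{C}^2}\le C\,L^{2N_0-1}M^L$$ for all $|n|\le N_0$ and all $L\in\mathbb{N}$.
   Context: $\mathcal{S}:=\{M=(m_{jk})\in U(2): m_{11}=m_{22}\neq 0\}$. For each $n$ set $P_n:=\begin{pmatrix}1&0\\0&0\end{pmatrix}U_n$, $Q_n:=\begin{pmatrix}0&0\\0&1\end{pmatrix}U_n$. The state space is $\mathcal{B}=\ell^\infty(\mathbb{Z};\mathbb{C}^2)$ of bounded sequences $\Psi=(\Psi(n))_{n\in\mathbb{Z}}$ with $\Psi(n)\in\mathbb{C}^2$ (column vectors), and the evolution $\mathcal{U}:\mathcal{B}\to\mathcal{B}$ is $(\mathcal{U}\Psi)(n)=P_{n+1}\Psi(n+1)+Q_{n-1}\Psi(n-1)$. *)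

From HB Require Import structures.
From mathcomp Require Import all_boot all_order all_algebra.
From mathcomp Require Import complex.
From mathcomp Require Import reals.
Set Implicit Arguments. Unset Strict Implicit. Unset Printing Implicit Defensive.
Import Order.TTheory GRing.Theory Num.Theory.
Local Open Scope ring_scope.

Section QW.
Variable R : realType.
Local Notation C := R[i].

Definition adjmx (M : 'M[C]_2) : 'M[C]_2 := (map_mx (@conjc R) M)^T.

Definition unitary2 (M : 'M[C]_2) : Prop := M *m adjmx M = 1%:M.

Definition inS (M : 'M[C]_2) : Prop :=
  unitary2 M /\ M 0 0 = M 1 1 /\ M 0 0 <> 0.

Definition E1 : 'M[C]_2 := \matrix_(i, j) (if (i == 0) && (j == 0) then 1 else 0).
Definition E2 : 'M[C]_2 := \matrix_(i, j) (if (i == 1) && (j == 1) then 1 else 0).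

Definition Pn (U : int -> 'M[C]_2) (n : int) : 'M[C]_2 := E1 *m U n.
Definition Qn (U : int -> 'M[C]_2) (n : int) : 'M[C]_2 := E2 *m U n.

Definition state := int -> 'cV[C]_2.

Definition evol (U : int -> 'M[C]_2) (Psi : state) : state :=
  fun n => Pn U (n + 1) *m Psi (n + 1) + Qn U (n - 1) *m Psi (n - 1).

Definition cnorm2 (v : 'cV[C]_2) : R :=
  Num.sqrt (\sum_(i < 2) (complex.Re (v i 0) ^+ 2 + complex.Im (v i 0) ^+ 2)).

Definition e1v : 'cV[C]_2 := \col_i (if i == 0 then 1 else 0).
Definition e2v : 'cV[C]_2 := \col_i (if i == 1 then 1 else 0).

Definition Psi1 (N0 : nat) : state := fun n => if n == (N0%:Z) then e1v else 0.
Definition Psi2 (N0 : nat) : state := fun n => if n == - (N0%:Z) then e2v else 0.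

Definition Psik (N0 : nat) (k : 'I_2) : state :=
  if k == 0 then Psi1 N0 else Psi2 N0.

End QW.

From HB Require Import structures.
From mathcomp Require Import all_boot all_order all_algebra.
From mathcomp Require Import complex.
From mathcomp Require Import reals.
From mathcomp Require Import zify ring lra.
Import Order.TTheory GRing.Theory Num.Theory.
Local Open Scope ring_scope.

(* The coins U_n lie in S and equal the identity for |n| >= N0, so outside the
   window [-N0, N0] the upper component of a state moves freely to the left and
   the lower component freely to the right.  For an initial state whose upper
   part vanishes right of N0 and whose lower part vanishes left of -N0, nothing
   ever enters the window from outside; by unitarity the energy (squared l^2
   norm) of the window is nonincreasing and drops at each step by at least the
   "leak" |b_s(N0)|^2 sent out through the right edge (window_energy_leak).

   Conversely, since the lower diagonal coin entry never vanishes, the walk can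
   be read backwards site by site: the energy at site N0 - j at time s is at
   most a constant times the total leak during the times [s - j, s + j]
   (site_energy_le_leak).  Summing over the window, the window energy is
   controlled by the leak, hence by the energy lost, over 4 N0 + 1 consecutive
   steps; so it contracts by a fixed ratio q < 1 over every such block
   (window_energy_decay), and the real-sequence lemma block_decay turns this
   into geometric decay.  The constants depend only on the coins, so a single
   pair (C, M) serves both initial states; the bound obtained is C M^L, which
   is stronger than the stated C L^(2 N0 - 1) M^L. *)

Lemma sum_ord2 (V : nmodType) (F : 'I_2 -> V) : \sum_(i < 2) F i = F 0 + F 1.
Proof. by rewrite big_ord_recl big_ord1; congr (_ + F _); apply: val_inj. Qed.

Definition sqmod {R : rcfType} (c : R[i]) : R :=
  complex.Re c ^+ 2 + complex.Im c ^+ 2.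

Section SquaredModulus.
Context {R : rcfType}.
Implicit Types x y : R[i].

Lemma sqmod_ge0 x : 0 <= sqmod x.
Proof. by rewrite addr_ge0 // sqr_ge0. Qed.

Lemma sqmod0 : sqmod (0 : R[i]) = 0.
Proof. by rewrite /sqmod /= expr0n addr0. Qed.

Lemma sqmod1 : sqmod (1 : R[i]) = 1.
Proof. by rewrite /sqmod /= expr0n expr1n addr0. Qed.

Lemma sqmodM x y : sqmod (x * y) = sqmod x * sqmod y.
Proof. by case: x y => a b [c d]; rewrite /sqmod /=; ring. Qed.

Lemma sqmodN x : sqmod (- x) = sqmod x.
Proof. by case: x => a b; rewrite /sqmod /=; ring. Qed.

Lemma sqmodD_le x y : sqmod (x + y) <= 2 * (sqmod x + sqmod y).
Proof.
case: x y => a b [c d]; rewrite /sqmod /=.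
have := sqr_ge0 (a - c); have := sqr_ge0 (b - d); nra.
Qed.

Lemma sqmod_gt0 x : x != 0 -> 0 < sqmod x.
Proof.
case: x => a b nz; rewrite lt_def sqmod_ge0 andbT /sqmod /=.
rewrite paddr_eq0 ?sqr_ge0 // !sqrf_eq0; apply: contra nz => /andP[/eqP-> /eqP->].
by [].
Qed.

Lemma sqmod_sumE x y : sqmod x + sqmod y = complex.Re (x * x^* + y * y^*).
Proof. by case: x y => a b [c d]; rewrite /sqmod /=; ring. Qed.

End SquaredModulus.

Lemma unitary2_sqmod {R : realType} {M : 'M[R[i]]_2} (x y : R[i]) :
  unitary2 M ->
  sqmod (M 0 0 * x + M 0 1 * y) + sqmod (M 1 0 * x + M 1 1 * y)
    = sqmod x + sqmod y.
Proof.
rewrite /unitary2 => /mulmx1C unitM.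
have col i j : \sum_k (M k i)^* * M k j = (i == j)%:R.
  move: (congr1 (fun A : 'M[R[i]]_2 => A i j) unitM).
  by rewrite !mxE => <-; apply: eq_bigr => k _; rewrite !mxE.
have := col 0 0; have := col 0 1; have := col 1 0; have := col 1 1.
rewrite !sum_ord2 /= => c11 c10 c01 c00.
rewrite !sqmod_sumE; congr complex.Re; rewrite !rmorphD !rmorphM /=.
transitivity (x * x^* * ((M 0 0)^* * M 0 0 + (M 1 0)^* * M 1 0)
  + y * y^* * ((M 0 1)^* * M 0 1 + (M 1 1)^* * M 1 1)
  + x * y^* * ((M 0 1)^* * M 0 0 + (M 1 1)^* * M 1 0)
  + y * x^* * ((M 0 0)^* * M 0 1 + (M 1 0)^* * M 1 1)); first by ring.
by rewrite c00 c01 c10 c11 /=; ring.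
Qed.

Definition energy {R : rcfType} (v : 'cV[R[i]]_2) : R :=
  sqmod (v 0 0) + sqmod (v 1 0).

Lemma energy_ge0 {R : rcfType} (v : 'cV[R[i]]_2) : 0 <= energy v.
Proof. by rewrite addr_ge0 // sqmod_ge0. Qed.

Lemma cnorm2E {R : realType} (v : 'cV[R[i]]_2) : cnorm2 v = Num.sqrt (energy v).
Proof. by rewrite /cnorm2 sum_ord2. Qed.

Lemma evol_top {R : realType} (U : int -> 'M[R[i]]_2) (Psi : state R) (n : int) :
  evol U Psi n 0 0 = U (n + 1) 0 0 * Psi (n + 1) 0 0 + U (n + 1) 0 1 * Psi (n + 1) 1 0.
Proof. by rewrite /evol /Pn /Qn /E1 /E2 !mxE !sum_ord2 !mxE !sum_ord2 !mxE /=; ring. Qed.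

Lemma evol_bot {R : realType} (U : int -> 'M[R[i]]_2) (Psi : state R) (n : int) :
  evol U Psi n 1 0 = U (n - 1) 1 0 * Psi (n - 1) 0 0 + U (n - 1) 1 1 * Psi (n - 1) 1 0.
Proof. by rewrite /evol /Pn /Qn /E1 /E2 !mxE !sum_ord2 !mxE !sum_ord2 !mxE /=; ring. Qed.

Definition window_sum {V : zmodType} (N : nat) (f : int -> V) : V :=
  \sum_(0 <= j < (2 * N).+1) f (N%:Z - j%:Z).

Lemma window_sum_shiftl {V : zmodType} (N : nat) (f : int -> V) :
  window_sum N (fun m => f (m + 1)) = f (N%:Z + 1) + window_sum N f - f (- N%:Z).
Proof.
rewrite /window_sum big_nat_recl // [in RHS]big_nat_recr //=.
have -> : N%:Z - (2 * N)%:Z = - N%:Z by lia.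
rewrite addrA addrK subr0; congr (_ + _); apply: eq_bigr => j _; congr f; lia.
Qed.

Lemma window_sum_shiftr {V : zmodType} (N : nat) (f : int -> V) :
  window_sum N (fun m => f (m - 1)) = window_sum N f - f N%:Z + f (- N%:Z - 1).
Proof.
rewrite /window_sum big_nat_recr // [in RHS]big_nat_recl //=.
have -> : N%:Z - (2 * N)%:Z - 1 = - N%:Z - 1 by lia.
rewrite subr0 [f N%:Z + _]addrC addrK; congr (_ + _); apply: eq_bigr => j _; congr f; lia.
Qed.

Lemma sum_subinterval_le (R : realDomainType) (f : nat -> R) (a c d b : nat) :
  (forall r, 0 <= f r) -> (a <= c)%N -> (c <= d)%N -> (d <= b)%N ->
  \sum_(c <= r < d) f r <= \sum_(a <= r < b) f r.
Proof.
move=> f_ge0 ac cd db.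
rewrite (big_cat_nat ac (leq_trans cd db)) (big_cat_nat cd db) /=.
have : 0 <= \sum_(a <= r < c) f r by apply: sumr_ge0.
have : 0 <= \sum_(d <= r < b) f r by apply: sumr_ge0.
lra.
Qed.

Lemma bernoulli_ineq (R : realFieldType) (x : R) (n : nat) :
  0 <= x <= 1 -> 1 - n%:R * x <= (1 - x) ^+ n.
Proof.
case/andP=> x_ge0 x_le1; elim: n => [|n IH]; first by rewrite expr0 mul0r subr0.
rewrite exprS -natr1.
have : (1 - x) * (1 - n%:R * x) <= (1 - x) * (1 - x) ^+ n by apply: ler_wpM2l; lra.
have : 0 <= n%:R * x * x by rewrite !mulr_ge0.
nra.
Qed.

(* A rate M < 1 such that M ^+ K >= q, used to spread a contraction by q
   over a block of K steps. *)
Definition block_rate {R : realFieldType} (q : R) (K : nat) : R :=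
  1 - (1 - q) / (2 * K%:R).

Lemma block_rate_gap {R : realFieldType} {q : R} {K : nat} :
  0 <= q -> q < 1 -> (0 < K)%N -> 0 < (1 - q) / (2 * K%:R) <= 1 / 2.
Proof.
move=> q_ge0 q_lt1 K_gt0; have K_ge1 : (1 : R) <= K%:R by rewrite ler1n.
apply/andP; split; first by apply: divr_gt0; lra.
by rewrite ler_pdivrMr; lra.
Qed.

Lemma block_rate_gt0 {R : realFieldType} {q : R} {K : nat} :
  0 <= q -> q < 1 -> (0 < K)%N -> 0 < block_rate q K.
Proof.
move=> q_ge0 q_lt1 K_gt0; have := block_rate_gap q_ge0 q_lt1 K_gt0.
by rewrite /block_rate; lra.
Qed.

Lemma block_rate_lt1 {R : realFieldType} {q : R} {K : nat} :
  0 <= q -> q < 1 -> (0 < K)%N -> block_rate q K < 1.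
Proof.
move=> q_ge0 q_lt1 K_gt0; have := block_rate_gap q_ge0 q_lt1 K_gt0.
by rewrite /block_rate; lra.
Qed.

(* By Bernoulli's inequality, K steps at the block rate beat one factor q. *)
Lemma block_rate_pow {R : realFieldType} {q : R} {K : nat} :
  0 <= q -> q < 1 -> (0 < K)%N -> q <= block_rate q K ^+ K.
Proof.
move=> q_ge0 q_lt1 K_gt0; have := block_rate_gap q_ge0 q_lt1 K_gt0.
have K_gt0' : (0 : R) < K%:R by rewrite ltr0n.
set x := (1 - q) / (2 * K%:R) => x_range.
have := @bernoulli_ineq R x K ltac:(apply/andP; split; lra).
have -> : K%:R * x = (1 - q) / 2 by rewrite /x; field; lra.
rewrite -/(block_rate q K); lra.
Qed.

Lemma block_decay {R : realFieldType} {q : R} {K : nat} {f : nat -> R} :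
  0 <= q -> q < 1 -> (0 < K)%N ->
  (forall t, 0 <= f t) -> (forall t, f t.+1 <= f t) ->
  (forall t, (0 < t)%N -> f (t + K)%N <= q * f t) ->
  forall L, (1 <= L)%N -> f L <= f 1 / block_rate q K ^+ K * block_rate q K ^+ L.
Proof.
move=> q_ge0 q_lt1 K_gt0 f_ge0 f_nonincr f_block L L_ge1.
set M := block_rate q K.
have M_gt0 : 0 < M := block_rate_gt0 q_ge0 q_lt1 K_gt0.
have M_lt1 : M < 1 := block_rate_lt1 q_ge0 q_lt1 K_gt0.
have f_mono : {homo f : i j / (i <= j)%N >-> j <= i}.
  by apply: homo_leq => // y x z; lra.
have f_blocks i : f (1 + i * K)%N <= q ^+ i * f 1.
  elim: i => [|i IH]; first by rewrite expr0 mul1r.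
  have -> : (1 + i.+1 * K = (1 + i * K) + K)%N by rewrite mulSn; lia.
  apply: le_trans (f_block _ _) _; first by rewrite addn_gt0.
  by rewrite exprS -mulrA; apply: ler_wpM2l.
have := divn_eq (L - 1) K; have := ltn_pmod (L - 1) K_gt0.
set i := ((L - 1) %/ K)%N; set r := ((L - 1) %% K)%N; clearbody i r => r_lt L_eq.
have L_lo : (1 + i * K <= L)%N by lia.
have L_hi : (L <= i * K + K)%N by lia.
apply: le_trans (f_mono _ _ L_lo) _; apply: le_trans (f_blocks i) _.
have q_pow : q ^+ i <= M ^+ (i * K).
  rewrite mulnC exprM; apply: lerXn2r; rewrite ?nnegrE ?exprn_ge0 //; try lra.
  exact: block_rate_pow.
rewrite mulrC -mulrA ler_wpM2l // ler_pdivlMl ?exprn_gt0 //.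
apply: le_trans (_ : M ^+ K * M ^+ (i * K) <= _).
  by apply: ler_wpM2l; rewrite ?exprn_ge0 //; lra.
by rewrite -exprD; apply: ler_wiXn2l; rewrite 1?addnC //; lra.
Qed.

Lemma sqrtrX {R : rcfType} (x : R) (n : nat) :
  0 <= x -> Num.sqrt (x ^+ n) = Num.sqrt x ^+ n.
Proof.
move=> x_ge0; elim: n => [|n IH]; first by rewrite !expr0 sqrtr1.
by rewrite !exprS sqrtrM // IH.
Qed.

Section Walk.
Context {R : realType}.
Variables (U : int -> 'M[R[i]]_2) (N0 : nat).
Hypothesis coins_in_S : forall n : int, inS (U n).
Hypothesis coins_free : forall n : int, (N0 <= `|n|)%N -> U n = 1%:M.

Lemma free_top (m : int) (x y : R[i]) :
  (N0 <= `|m|)%N -> U m 0 0 * x + U m 0 1 * y = x.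
Proof. by move=> /coins_free->; rewrite !mxE /= mul1r mul0r addr0. Qed.

Lemma free_bot (m : int) (x y : R[i]) :
  (N0 <= `|m|)%N -> U m 1 0 * x + U m 1 1 * y = y.
Proof. by move=> /coins_free->; rewrite !mxE /= mul1r mul0r add0r. Qed.

Lemma coin_entry10_le1 (m : int) : sqmod (U m 1 0) <= 1.
Proof.
have := unitary2_sqmod 1 0 (proj1 (coins_in_S m)).
rewrite !mulr1 !mulr0 !addr0 sqmod1 sqmod0 addr0.
by have := sqmod_ge0 (U m 0 0); lra.
Qed.

(* The diagonal coin entries never vanish: this makes the walk invertible
   site by site. *)
Lemma coin_diag_gt0 (m : int) : 0 < sqmod (U m 1 1).
Proof. by case: (coins_in_S m) => _ [<- nz]; apply/sqmod_gt0/eqP. Qed.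

(* The constant relating the energy at site N0 - j to the nearby leak; it
   follows the recursion of energy_from_right. *)
Fixpoint leak_const (j : nat) : R :=
  if j is j'.+1 then (1 + 2 / sqmod (U (N0%:Z - j%:Z) 1 1)) * (2 * leak_const j')
  else 1.

Lemma leak_const_ge0 (j : nat) : 0 <= leak_const j.
Proof.
elim: j => [|j IH] //=; apply: mulr_ge0; last by rewrite mulr_ge0.
by rewrite addr_ge0 // divr_ge0 // ltW // coin_diag_gt0.
Qed.

Definition leak_sum : R := \sum_(0 <= j < (2 * N0).+1) leak_const j.

(* The contraction ratio of the window energy over 4 N0 + 1 steps. *)
Definition decay_ratio : R := leak_sum / (1 + leak_sum).

Lemma leak_sum_ge0 : 0 <= leak_sum.
Proof. by apply: sumr_ge0 => j _; apply: leak_const_ge0. Qed.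

Lemma decay_ratio_ge0 : 0 <= decay_ratio.
Proof. by have := leak_sum_ge0; rewrite /decay_ratio => g_ge0; apply: divr_ge0; lra. Qed.

Lemma decay_ratio_lt1 : decay_ratio < 1.
Proof. by have := leak_sum_ge0; rewrite /decay_ratio => g_ge0; rewrite ltr_pdivrMr; lra. Qed.

Section State.
Variable P : state R.
Hypothesis P_top_right : forall n : int, N0%:Z < n -> P n 0 0 = 0.
Hypothesis P_bot_left : forall n : int, n < - N0%:Z -> P n 1 0 = 0.
Hypothesis P_energy_le1 : forall n : int, energy (P n) <= 1.

Definition psi (s : nat) : state R := iter s (evol U) P.
Definition top (s : nat) (n : int) : R[i] := psi s n 0 0.
Definition bot (s : nat) (n : int) : R[i] := psi s n 1 0.

Lemma top_succ s n :
  top s.+1 n = U (n + 1) 0 0 * top s (n + 1) + U (n + 1) 0 1 * bot s (n + 1).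
Proof. exact: evol_top. Qed.

Lemma bot_succ s n :
  bot s.+1 n = U (n - 1) 1 0 * top s (n - 1) + U (n - 1) 1 1 * bot s (n - 1).
Proof. exact: evol_bot. Qed.

Lemma top_right s n : N0%:Z < n -> top s n = 0.
Proof.
elim: s n => [|s IH] n n_gt; first exact: P_top_right.
by rewrite top_succ free_top ?IH //; lia.
Qed.

Lemma bot_left s n : n < - N0%:Z -> bot s n = 0.
Proof.
elim: s n => [|s IH] n n_lt; first exact: P_bot_left.
by rewrite bot_succ free_bot ?IH //; lia.
Qed.

Lemma top_at_edge s : (0 < s)%N -> top s N0%:Z = 0.
Proof. by case: s => // s _; rewrite top_succ free_top ?top_right //; lia. Qed.

(* The energy sent from site m to the left (out_top) and to the right
   (out_bot) in one step; by unitarity they split the energy at m. *)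
Definition out_top s m := sqmod (U m 0 0 * top s m + U m 0 1 * bot s m).
Definition out_bot s m := sqmod (U m 1 0 * top s m + U m 1 1 * bot s m).

Lemma out_split s m : out_top s m + out_bot s m = energy (psi s m).
Proof. exact: unitary2_sqmod (proj1 (coins_in_S m)). Qed.

Lemma energy_succ s m : energy (psi s.+1 m) = out_top s (m + 1) + out_bot s (m - 1).
Proof. by rewrite /energy -/(top _ _) -/(bot _ _) top_succ bot_succ. Qed.

Definition window_energy (s : nat) : R := window_sum N0 (fun m => energy (psi s m)).

Definition leak (s : nat) : R := sqmod (bot s N0%:Z).

Lemma leak_ge0 s : 0 <= leak s.
Proof. exact: sqmod_ge0. Qed.

Lemma window_energy_balance s :
  window_energy s.+1 + out_top s (- N0%:Z) + out_bot s N0%:Z = window_energy s.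
Proof.
have split_sum : window_energy s.+1
    = window_sum N0 (fun m => out_top s (m + 1)) + window_sum N0 (fun m => out_bot s (m - 1)).
  by rewrite /window_energy /window_sum -big_split; apply: eq_bigr => j _; rewrite energy_succ.
have in_top : out_top s (N0%:Z + 1) = 0.
  by rewrite /out_top free_top ?top_right ?sqmod0 //; lia.
have in_bot : out_bot s (- N0%:Z - 1) = 0.
  by rewrite /out_bot free_bot ?bot_left ?sqmod0 //; lia.
have whole : window_energy s = window_sum N0 (out_top s) + window_sum N0 (out_bot s).
  by rewrite /window_energy /window_sum -big_split /=; apply: eq_bigr => j _; rewrite out_split.
rewrite split_sum window_sum_shiftl (window_sum_shiftr N0 (out_bot s)) in_top in_bot whole.
by rewrite add0r addr0; lra.
Qed.

Lemma window_energy_leak s : window_energy s.+1 + leak s <= window_energy s.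
Proof.
rewrite -(window_energy_balance s).
have -> : out_bot s N0%:Z = leak s by rewrite /out_bot free_bot //; lia.
have : 0 <= out_top s (- N0%:Z) by apply: sqmod_ge0.
lra.
Qed.

Lemma leak_total t n :
  \sum_(t <= r < t + n) leak r <= window_energy t - window_energy (t + n)%N.
Proof.
elim: n => [|n IH]; first by rewrite addn0 big_geq // subrr.
rewrite addnS big_nat_recr /= ?leq_addr //.
by have := window_energy_leak (t + n); lra.
Qed.

Lemma window_energy_nonincr t n : window_energy (t + n)%N <= window_energy t.
Proof.
have := leak_total t n.
have : 0 <= \sum_(t <= r < t + n) leak r by apply: sumr_ge0 => r _; apply: leak_ge0.
lra.
Qed.

Definition leak_window (j s : nat) : R := \sum_(s - j <= r < s + j + 1) leak r.

Lemma leak_window_sub j s j' s' :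
  (s' - j' <= s - j)%N -> (s + j <= s' + j')%N -> leak_window j s <= leak_window j' s'.
Proof. by move=> lo hi; apply: sum_subinterval_le => [r|||]; [apply: leak_ge0 | lia..]. Qed.

(* Local inversion of the walk: the energy at m at time s is controlled by
   the energy at m + 1 one step before and one step after, because the lower
   coin entry at m is invertible. *)
Lemma energy_from_right s m : (0 < s)%N ->
  energy (psi s m)
    <= (1 + 2 / sqmod (U m 1 1)) * (energy (psi s.-1 (m + 1)) + energy (psi s.+1 (m + 1))).
Proof.
move=> s_gt0; set beta := sqmod (U m 1 1).
have beta_gt0 : 0 < beta := coin_diag_gt0 m.
set X := energy (psi s.-1 (m + 1)); set Y := energy (psi s.+1 (m + 1)).
have top_le : sqmod (top s m) <= X.
  rewrite /X -out_split /out_top -top_succ prednK //.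
  by rewrite lerDl; apply: sqmod_ge0.
have next_bot_le : sqmod (bot s.+1 (m + 1)) <= Y.
  by rewrite /Y /energy -/(bot _ _) lerDr; apply: sqmod_ge0.
have bot_le : beta * sqmod (bot s m) <= 2 * (X + Y).
  have solve : U m 1 1 * bot s m = bot s.+1 (m + 1) - U m 1 0 * top s m.
    by rewrite bot_succ addrK; ring.
  rewrite /beta -sqmodM solve; apply: le_trans (sqmodD_le _ _) _.
  rewrite sqmodN sqmodM.
  have := coin_entry10_le1 m; have := sqmod_ge0 (top s m); nra.
have bot_le' : sqmod (bot s m) <= 2 * (X + Y) / beta by rewrite ler_pdivlMr // mulrC.
have Y_ge0 : 0 <= Y := energy_ge0 _.
have -> : (1 + 2 / beta) * (X + Y) = X + Y + 2 * (X + Y) / beta by field; lra.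
by rewrite /energy -/(top _ _) -/(bot _ _); lra.
Qed.

(* Iterating energy_from_right from the right edge inwards: the energy at
   site N0 - j is controlled by the leak during [s - j, s + j]. *)
Lemma site_energy_le_leak j s : (j < s)%N ->
  energy (psi s (N0%:Z - j%:Z)) <= leak_const j * leak_window j s.
Proof.
elim: j s => [|j IH] s js.
  rewrite subr0 /leak_window subn0 addn0 addn1 big_nat1 mul1r.
  by rewrite /energy -/(top _ _) top_at_edge // sqmod0 add0r.
apply: le_trans (energy_from_right _ _ _) _; first by lia.
have -> : N0%:Z - j.+1%:Z + 1 = N0%:Z - j%:Z by lia.
rewrite /= -mulrA; apply: ler_wpM2l.
  by rewrite addr_ge0 // divr_ge0 // ltW // coin_diag_gt0.
have nearby s' : (s.-1 <= s' <= s.+1)%N ->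
    energy (psi s' (N0%:Z - j%:Z)) <= leak_const j * leak_window j.+1 s.
  move=> s'_near; apply: le_trans (IH _ _) _; first by lia.
  by apply: ler_wpM2l; [apply: leak_const_ge0 | apply: leak_window_sub; lia].
have := nearby s.-1 ltac:(lia); have := nearby s.+1 ltac:(lia).
lra.
Qed.

Lemma window_energy_le_leak s : (2 * N0 < s)%N ->
  window_energy s <= leak_sum * leak_window (2 * N0) s.
Proof.
move=> s_gt; rewrite /window_energy /window_sum /leak_sum mulr_suml.
apply: ler_sum_nat => j /andP[_ j_lt].
apply: le_trans (site_energy_le_leak _ _ _) _; first by lia.
by apply: ler_wpM2l; [apply: leak_const_ge0 | apply: leak_window_sub; lia].
Qed.

Lemma window_energy_decay t : (0 < t)%N ->
  window_energy (t + (4 * N0).+1)%N <= decay_ratio * window_energy t.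
Proof.
move=> t_gt0.
have late_le : window_energy (t + (4 * N0).+1)%N <= window_energy (t + 2 * N0)%N.
  have -> : (t + (4 * N0).+1 = (t + 2 * N0) + (2 * N0).+1)%N by lia.
  exact: window_energy_nonincr.
have mid_le := window_energy_le_leak (t + 2 * N0)%N ltac:(lia).
have leaked : leak_window (2 * N0) (t + 2 * N0)%N
    <= window_energy t - window_energy (t + (4 * N0).+1)%N.
  rewrite /leak_window.
  have -> : (t + 2 * N0 - 2 * N0 = t)%N by lia.
  have -> : (t + 2 * N0 + 2 * N0 + 1 = t + (4 * N0).+1)%N by lia.
  exact: leak_total.
have g_ge0 := leak_sum_ge0.
have : leak_sum * leak_window (2 * N0) (t + 2 * N0)%N
    <= leak_sum * (window_energy t - window_energy (t + (4 * N0).+1)%N).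
  exact: ler_wpM2l.
rewrite /decay_ratio mulrAC ler_pdivlMr; lra.
Qed.

Lemma window_energy0_le : window_energy 0 <= (2 * N0).+1%:R.
Proof.
have -> : (2 * N0).+1%:R = \sum_(0 <= j < (2 * N0).+1) (1 : R).
  by rewrite sumr_const_nat subn0.
by apply: ler_sum_nat => j _; apply: P_energy_le1.
Qed.

Lemma site_energy_le_window s n : (`|n| <= N0)%N -> energy (psi s n) <= window_energy s.
Proof.
move=> n_le; have [j j_le ->] : exists2 j, (j <= 2 * N0)%N & n = N0%:Z - j%:Z.
  by exists `|N0%:Z - n|%N; lia.
have := @sum_subinterval_le R (fun j => energy (psi s (N0%:Z - j%:Z))) 0 j j.+1 (2 * N0).+1
  (fun r => energy_ge0 _) (leq0n _) (leqnSn _) j_le.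
by rewrite big_nat1.
Qed.

Lemma state_energy_bound L n : (1 <= L)%N -> (`|n| <= N0)%N ->
  energy (psi L n) <= (2 * N0).+1%:R / block_rate decay_ratio (4 * N0).+1 ^+ (4 * N0).+1
                       * block_rate decay_ratio (4 * N0).+1 ^+ L.
Proof.
move=> L_ge1 n_le; apply: le_trans (site_energy_le_window L n n_le) _.
have q_ge0 := decay_ratio_ge0; have q_lt1 := decay_ratio_lt1.
set M := block_rate decay_ratio (4 * N0).+1.
have M_gt0 : 0 < M := block_rate_gt0 q_ge0 q_lt1 (ltn0Sn _).
have E_ge0 t : 0 <= window_energy t by apply: sumr_ge0 => j _; apply: energy_ge0.
have E_nonincr t : window_energy t.+1 <= window_energy t.
  by rewrite -addn1; apply: window_energy_nonincr.
apply: le_trans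
  (block_decay q_ge0 q_lt1 (ltn0Sn _) E_ge0 E_nonincr window_energy_decay L L_ge1) _.
rewrite -/M; apply: ler_wpM2r; first by rewrite exprn_ge0 // ltW.
apply: ler_wpM2r; first by rewrite invr_ge0 exprn_ge0 // ltW.
exact: le_trans (window_energy_nonincr 0 1) window_energy0_le.
Qed.

End State.
End Walk.

Lemma Psik_top_right {R : realType} (N0 : nat) (k : 'I_2) (n : int) :
  N0%:Z < n -> @Psik R N0 k n 0 0 = 0.
Proof.
move=> n_gt; rewrite /Psik /Psi1 /Psi2.
case: (k == 0); first by rewrite (_ : (n == N0%:Z) = false) ?mxE //; apply/eqP; lia.
by rewrite (_ : (n == - N0%:Z) = false) ?mxE //; apply/eqP; lia.
Qed.

Lemma Psik_bot_left {R : realType} (N0 : nat) (k : 'I_2) (n : int) :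
  n < - N0%:Z -> @Psik R N0 k n 1 0 = 0.
Proof.
move=> n_lt; rewrite /Psik /Psi1 /Psi2.
case: (k == 0); first by rewrite (_ : (n == N0%:Z) = false) ?mxE //; apply/eqP; lia.
by rewrite (_ : (n == - N0%:Z) = false) ?mxE //; apply/eqP; lia.
Qed.

Lemma Psik_energy_le1 {R : realType} (N0 : nat) (k : 'I_2) (n : int) :
  energy (@Psik R N0 k n) <= 1.
Proof.
rewrite /Psik /Psi1 /Psi2 /energy.
by case: (k == 0); [case: (n == N0%:Z) | case: (n == - N0%:Z)];
  rewrite /e1v /e2v !mxE /= ?sqmod0 ?sqmod1 ?addr0 ?add0r.
Qed.

Theorem mainTheorem2 (R : realType) (N0 : nat) (U : int -> 'M[R[i]]_2) :
  (1 <= N0)%N ->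
  (forall n : int, inS (U n)) ->
  (forall n : int, (N0 <= `|n|)%N -> U n = 1%:M) ->
  exists (C M : R), 0 < C /\ 0 < M /\ M < 1 /\
    forall (k : 'I_2) (n : int) (L : nat),
      (`|n| <= N0)%N -> (1 <= L)%N ->
      cnorm2 (iter L (evol U) (@Psik R N0 k) n)
        <= C * (L%:R) ^+ (2 * N0 - 1) * M ^+ L.
Proof.
move=> _ coins_in_S coins_free.
have q_ge0 := decay_ratio_ge0 U N0 coins_in_S.
have q_lt1 := decay_ratio_lt1 U N0 coins_in_S.
set M := block_rate (decay_ratio U N0) (4 * N0).+1.
have M_gt0 : 0 < M := block_rate_gt0 q_ge0 q_lt1 (ltn0Sn _).
have M_lt1 : M < 1 := block_rate_lt1 q_ge0 q_lt1 (ltn0Sn _).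
set C0 := (2 * N0).+1%:R / M ^+ (4 * N0).+1.
have C0_gt0 : 0 < C0 by rewrite divr_gt0 ?exprn_gt0.
exists (Num.sqrt C0), (Num.sqrt M).
split; first by rewrite sqrtr_gt0.
split; first by rewrite sqrtr_gt0.
split; first by rewrite -sqrtr1 ltr_sqrt.
move=> k n L n_le L_ge1; rewrite cnorm2E.
have bound := state_energy_bound U N0 coins_in_S coins_free (@Psik R N0 k)
  (Psik_top_right N0 k) (Psik_bot_left N0 k) (Psik_energy_le1 N0 k) L n L_ge1 n_le.
have CM_ge0 : 0 <= C0 * M ^+ L by rewrite mulr_ge0 ?exprn_ge0 // ltW.
apply: le_trans (_ : _ <= Num.sqrt (C0 * M ^+ L)) _.
  by rewrite ler_sqrt //; exact: bound.
rewrite (sqrtrM _ (ltW C0_gt0)) (sqrtrX _ _ (ltW M_gt0)) mulrAC.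
apply: ler_peMr; first by rewrite mulr_ge0 ?sqrtr_ge0 // exprn_ge0 // sqrtr_ge0.
by rewrite exprn_ege1 // ler1n.
Qed.
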